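(* Let $M, N \geq 1$ be integers and let $\phi_1(x), \ldots, \phi_{MN}(x)$ be sufficiently differentiable $N$-vector valued functions of $x$. Let $\Phi$ be the $MN \times MN$ block Wronskian matrix $$\Phi=\begin{pmatrix} \phi_1&\phi_2&\cdots&\phi_{MN}\\ \phi_1'&\phi_2'&\cdots&\phi_{MN}'\\ \vdots&\vdots&\ddots&\vdots\\ \phi_1^{(M-1)}&\phi_2^{(M-1)}&\cdots&\phi_{MN}^{(M-1)} \end{pmatrix},$$ whose first $N$ rows are the columns $\phi_i$ and every other entry is the derivative of the entry $N$ rows above it. Suppose $\det \Phi \neq 0$, so that $\Phi^{-1}$ is defined. Let $C_0, \ldots, C_{M-1}$ be the $N\times N$ matrix functions defined by the block decomposition $$(C_0\ C_1\ \cdots\ C_{M-1}) = \left(\phi_1^{(M)}\ \cdots\ \phi_{MN}^{(M)}\right)\Phi^{-1},$$ and define the matrix differential operator $$K = I\,\partial^M - \sum_{j=0}^{M-1} C_j(x)\,\partial^j,$$ which is written in matrix notation as $K=I\,\partial^M-\left(\phi_1^{(M)}\ \cdots\ \phi_{MN}^{(M)}\right)\Phi^{-1}\begin{pmatrix} I\\ \partial I\\ \vdots\\ \partial^{M-1}I\end{pmatrix}$. Then: (a) $K$ is the unique monic MODO of order $M$ such that $K(\phi_i) = 0$ for all $1 \leq i \leq MN$. (b) If $L$ is any MODO such that $L(\phi_i) = 0$ for all $1 \leq i \leq MN$, then there exists a MODO $Q$ such that $L = Q \circ K$.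
   Context: All functions are assumed to be sufficiently differentiable functions of $x$. A matrix coefficient ordinary differential operator (MODO) is a polynomial $L=\sum_{i=0}^n \alpha_i(x)\partial^i$ in $\partial$ whose coefficients $\alpha_i(x)$ are $N\times N$ matrix-valued functions of $x$. Such an operator acts on an $N$-vector valued function $f$ by $L(f)=\sum_{i=0}^n \alpha_i(x) f^{(i)}(x)$, with matrix-vector products. MODOs are added coefficientwise. They are multiplied by extending linearly the rule $$\left(\alpha(x)\partial^m\right)\circ\left(\beta(x)\partial^n\right)=\sum_{i=0}^m \binom{m}{i}\alpha(x)\beta^{(i)}(x)\partial^{m+n-i},$$ in which the products of coefficients are matrix products. With this rule, $(L\circ Q)(f) = L(Q(f))$. The order of a MODO is the highest power of $\partial$ that appears with a nonzero coefficient. A MODO of order $M$ is monic if its coefficient of $\partial^M$ is the $N\times N$ identity matrix $I$. The symbol $0$ in $L(\phi_i)=0$ denotes the zero vector. *)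

From HB Require Import structures.
From mathcomp Require Import all_boot all_order all_algebra.
From mathcomp Require Import all_classical all_reals all_analysis.
Set Implicit Arguments. Unset Strict Implicit. Unset Printing Implicit Defensive.
Import Order.TTheory GRing.Theory Num.Theory.
Import numFieldNormedType.Exports.
Local Open Scope ring_scope.

Section Defs.
Variable R : realType.

Definition dn (n : nat) (f : R -> R) : R -> R := derive1n n f.

(* "sufficiently differentiable": infinitely differentiable on R *)
Definition smooth (f : R -> R) : Prop := forall n x, derivable (dn n f) x 1.

Definition mxdn (p q : nat) (n : nat) (A : R -> 'M[R]_(p, q)) : R -> 'M[R]_(p, q) :=
  fun x => \matrix_(i, j) dn n (fun y => A y i j) x.

Definition mx_smooth (p q : nat) (A : R -> 'M[R]_(p, q)) : Prop :=
  forall i j, smooth (fun y => A y i j).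

(* entry of a matrix at natural-number indices (0 outside the range) *)
Definition mxent (p q : nat) (A : 'M[R]_(p, q)) (a b : nat) : R :=
  match @insub _ (fun k => k < p)%N 'I_p a, @insub _ (fun k => k < q)%N 'I_q b with
  | Some i, Some j => A i j
  | _, _ => 0
  end.

(* A matrix coefficient ordinary differential operator (MODO) of size N:
   the list of its coefficients alpha_0, alpha_1, ..., alpha_n
   (L = sum_i alpha_i(x) d^i); trailing zero coefficients are allowed. *)
Definition modo (N : nat) := seq (R -> 'M[R]_N).

Definition coef (N : nat) (L : modo N) (i : nat) : R -> 'M[R]_N :=
  nth (fun _ => 0) L i.

Definition modo_eq (N : nat) (L1 L2 : modo N) : Prop :=
  forall i x, coef L1 i x = coef L2 i x.

Definition modo_smooth (N : nat) (L : modo N) : Prop :=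
  forall i, mx_smooth (coef L i).

Definition monic_of_order (N : nat) (M : nat) (L : modo N) : Prop :=
  (forall x, coef L M x = 1%:M) /\ (forall i x, (M < i)%N -> coef L i x = 0).

Definition modo_apply (N : nat) (L : modo N) (f : R -> 'cV[R]_N) : R -> 'cV[R]_N :=
  fun x => \sum_(i < size L) coef L i x *m mxdn i f x.

(* product: (a d^m)(b d^n) = sum_{i<=m} binom(m,i) a b^(i) d^(m+n-i) *)
Definition modo_mul (N : nat) (L Q : modo N) : modo N :=
  mkseq (fun k => fun x =>
    \sum_(m < size L) \sum_(n < size Q) \sum_(i < m.+1)
       if (m + n - i == k)%N then
         ('C(m, i))%:R *: (coef L m x *m mxdn i (coef Q n) x)
       else 0) (size L + size Q).

Definition wronsk (M N : nat) (phi : 'I_(M * N) -> R -> 'cV[R]_N) (x : R)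
  : 'M[R]_(M * N) :=
  \matrix_(r, i) mxent (mxdn (r %/ N) (phi i) x) (r %% N) 0.

Definition wronsk_top (M N : nat) (phi : 'I_(M * N) -> R -> 'cV[R]_N) (x : R)
  : 'M[R]_(N, M * N) :=
  \matrix_(a, i) mxdn M (phi i) x a 0.

(* (C_0 ... C_{M-1}) = (phi^(M)) Phi^{-1};  C_j is the j-th N x N block *)
Definition Ccoef (M N : nat) (phi : 'I_(M * N) -> R -> 'cV[R]_N) (j : nat)
  : R -> 'M[R]_N :=
  fun x => \matrix_(a, b)
    mxent (wronsk_top phi x *m invmx (wronsk phi x)) a (j * N + b).

Definition Kop (M N : nat) (phi : 'I_(M * N) -> R -> 'cV[R]_N) : modo N :=
  rcons (mkseq (fun j => fun x => - Ccoef phi j x) M) (fun _ => 1%:M).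

End Defs.

From mathcomp Require Import all_boot all_order all_algebra.
From mathcomp Require Import all_classical all_reals all_analysis.
From mathcomp Require Import zify.
Import Order.TTheory GRing.Theory Num.Theory.
Local Open Scope ring_scope.
Set Implicit Arguments. Unset Strict Implicit. Unset Printing Implicit Defensive.

(* Since the Wronskian is invertible, an operator of order less than M that
   annihilates every phi_i vanishes: its coefficient blocks, laid side by
   side, are annihilated by the Wronskian.  K annihilates the phi_i because
   its lower coefficients solve exactly this linear system.  Any annihilator L
   can be divided on the right by the monic K, L = Q K + T with T of order less
   than M; as (Q K)(phi_i) = Q(K(phi_i)) = 0, T annihilates the phi_i, hence
   T = 0.  Likewise a monic annihilator K' of order M has the same
   coefficients as K from order M on, so K' - K, of order less than M,
   vanishes. *)

Section SmoothFunctions.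
Variable R : realType.
Implicit Types f g : R -> R.

Lemma derive1D f g x : derivable f x 1 -> derivable g x 1 ->
  derive1 (fun y => f y + g y) x = derive1 f x + derive1 g x.
Proof. by move=> hf hg; rewrite !derive1E; exact: (deriveD hf hg). Qed.

Lemma derive1M f g x : derivable f x 1 -> derivable g x 1 ->
  derive1 (fun y => f y * g y) x = f x * derive1 g x + g x * derive1 f x.
Proof. by move=> hf hg; rewrite !derive1E; exact: (deriveM hf hg). Qed.

Lemma derive1V f x : f x != 0 -> derivable f x 1 ->
  derive1 (fun y => (f y)^-1) x = - (f x) ^- 2 * derive1 f x.
Proof. by move=> h1 h2; rewrite !derive1E; exact: deriveV. Qed.

Lemma dnS f n : dn n.+1 f = dn n (derive1 f).
Proof. by rewrite /dn derive1Sn. Qed.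

Lemma dnSr f n : dn n.+1 f = derive1 (dn n f).
Proof. by rewrite /dn derive1nS. Qed.

Lemma dn_dn f m n : dn m (dn n f) = dn (m + n) f.
Proof. by rewrite /dn /derive1n iterD. Qed.

Lemma smooth_derivable f x : smooth f -> derivable f x 1.
Proof. by move=> h; exact: (h 0%N x). Qed.

Lemma smooth_derive1 f : smooth f -> smooth (derive1 f).
Proof. by move=> h n x; rewrite -dnS; exact: h. Qed.

Lemma smooth_dn f k : smooth f -> smooth (dn k f).
Proof. by move=> h n x; rewrite dn_dn; exact: h. Qed.

Lemma smooth_of_derive1_closed (P : (R -> R) -> Prop) :
  (forall f, P f -> (forall x, derivable f x 1) /\ P (derive1 f)) ->
  forall f, P f -> smooth f.
Proof.
move=> hP f Pf n; elim: n f Pf => [|n IH] f Pf x; first by case: (hP f Pf).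
by rewrite dnS; apply: IH; case: (hP f Pf).
Qed.

(* The derivative of a product is a sum of products, so smoothness of products
   is obtained by showing that the whole ring generated by the smooth functions
   and the inverses of nonvanishing ones is closed under derive1. *)
Inductive ring_closure (B : (R -> R) -> Prop) : (R -> R) -> Prop :=
| ring_closure_base f : B f -> ring_closure B f
| ring_closure_cst (c : R) : ring_closure B (fun _ => c)
| ring_closureD f g : ring_closure B f -> ring_closure B g ->
    ring_closure B (fun y => f y + g y)
| ring_closureM f g : ring_closure B f -> ring_closure B g ->
    ring_closure B (fun y => f y * g y).

Lemma ring_closure_derive1 (B : (R -> R) -> Prop) :
  (forall f, B f -> (forall x, derivable f x 1) /\ ring_closure B (derive1 f)) ->
  forall f, ring_closure B f ->
    (forall x, derivable f x 1) /\ ring_closure B (derive1 f).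
Proof.
move=> hB f; elim => {f}.
- by move=> f /hB.
- move=> c; split=> [x|]; first exact: derivable_cst.
  have -> : derive1 (fun _ : R => c) = fun _ => 0.
    by apply/funext => x; rewrite derive1_cst.
  exact: ring_closure_cst.
- move=> f g _ [df cf] _ [dg cg]; split=> [x|]; first exact: derivableD.
  have -> : derive1 (fun y => f y + g y) = fun y => derive1 f y + derive1 g y.
    by apply/funext => x; rewrite derive1D.
  exact: ring_closureD.
- move=> f g hf [df cf] hg [dg cg]; split=> [x|]; first exact: derivableM.
  have -> : derive1 (fun y => f y * g y) =
      fun y => f y * derive1 g y + g y * derive1 f y.
    by apply/funext => x; rewrite derive1M.
  by apply: ring_closureD; apply: ring_closureM.
Qed.

Definition smooth_or_inv_smooth f : Prop := smooth f \/
  exists g, [/\ smooth g, forall x, g x != 0 & f = fun x => (g x)^-1].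

Lemma ring_closure_smooth f : ring_closure smooth_or_inv_smooth f -> smooth f.
Proof.
apply: smooth_of_derive1_closed; apply: ring_closure_derive1.
move=> h [hf|[g [sg g0 ->]]].
  split=> [x|]; first exact: smooth_derivable.
  by apply: ring_closure_base; left; exact: smooth_derive1.
split=> [x|]; first by apply: derivableV => //; exact: smooth_derivable.
have -> : derive1 (fun y => (g y)^-1) =
    fun y => (fun _ => -1) y * ((g y)^-1 * (g y)^-1 * derive1 g y).
  apply/funext => x; rewrite derive1V //; last exact: smooth_derivable.
  by rewrite mulN1r mulNr -exprVn expr2.
apply: ring_closureM; first exact: ring_closure_cst.
apply: ring_closureM; last by apply: ring_closure_base; left; exact: smooth_derive1.
by apply: ring_closureM; apply: ring_closure_base; right; exists g.
Qed.

Let smooth_ring_closure f : smooth f -> ring_closure smooth_or_inv_smooth f.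
Proof. by move=> h; apply: ring_closure_base; left. Qed.

Lemma smooth_cst (c : R) : smooth (fun _ => c).
Proof. by apply: ring_closure_smooth; exact: ring_closure_cst. Qed.

Lemma smoothD f g : smooth f -> smooth g -> smooth (fun y => f y + g y).
Proof.
by move=> hf hg; apply: ring_closure_smooth; apply: ring_closureD;
  exact: smooth_ring_closure.
Qed.

Lemma smoothM f g : smooth f -> smooth g -> smooth (fun y => f y * g y).
Proof.
by move=> hf hg; apply: ring_closure_smooth; apply: ring_closureM;
  exact: smooth_ring_closure.
Qed.

Lemma smoothN f : smooth f -> smooth (fun y => - f y).
Proof.
move=> hf; have -> : (fun y => - f y) = fun y => (fun _ => -1) y * f y.
  by apply/funext => y; rewrite mulN1r.
by apply: smoothM => //; exact: smooth_cst.
Qed.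

Lemma smoothV f : smooth f -> (forall x, f x != 0) -> smooth (fun y => (f y)^-1).
Proof.
by move=> hf h0; apply: ring_closure_smooth; apply: ring_closure_base; right; exists f.
Qed.

Lemma smooth_sum (I : Type) (r : seq I) (P : pred I) (F : I -> R -> R) :
  (forall i, smooth (F i)) -> smooth (fun y => \sum_(i <- r | P i) F i y).
Proof.
move=> hF; elim: r => [|a r IH].
  by under eq_fun do rewrite big_nil; exact: smooth_cst.
by under eq_fun do rewrite big_cons; case: (P a) => //; exact: smoothD.
Qed.

Lemma smooth_prod (I : Type) (r : seq I) (P : pred I) (F : I -> R -> R) :
  (forall i, smooth (F i)) -> smooth (fun y => \prod_(i <- r | P i) F i y).
Proof.
move=> hF; elim: r => [|a r IH].
  by under eq_fun do rewrite big_nil; exact: smooth_cst.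
by under eq_fun do rewrite big_cons; case: (P a) => //; exact: smoothM.
Qed.

Lemma derivable_sum (I : Type) (r : seq I) (P : pred I) (F : I -> R -> R) x :
  (forall i, derivable (F i) x 1) ->
  derivable (fun y => \sum_(i <- r | P i) F i y) x 1.
Proof.
move=> hF; elim: r => [|a r IH].
  by under eq_fun do rewrite big_nil; exact: derivable_cst.
by under eq_fun do rewrite big_cons; case: (P a) => //; exact: derivableD.
Qed.

Lemma derive1_sum (I : Type) (r : seq I) (P : pred I) (F : I -> R -> R) :
  (forall i x, derivable (F i) x 1) ->
  derive1 (fun y => \sum_(i <- r | P i) F i y) =
  fun y => \sum_(i <- r | P i) derive1 (F i) y.
Proof.
move=> hF; apply/funext => x; elim: r => [|a r IH].
  by under eq_fun do rewrite big_nil; rewrite derive1_cst big_nil.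
under eq_fun do rewrite big_cons; rewrite big_cons; case: (P a) => //.
by rewrite derive1D ?IH //; exact: derivable_sum.
Qed.

Lemma dn_sum (I : Type) (r : seq I) (P : pred I) (F : I -> R -> R) m :
  (forall i, smooth (F i)) ->
  dn m (fun y => \sum_(i <- r | P i) F i y) =
  fun y => \sum_(i <- r | P i) dn m (F i) y.
Proof.
move=> hF; elim: m => [|m IH] //.
rewrite dnSr IH derive1_sum => [|i x]; last exact/smooth_derivable/smooth_dn.
by apply/funext => y; apply: eq_bigr => i _; rewrite dnSr.
Qed.

Lemma dn_cst0 m : dn m (fun _ : R => 0 : R) = fun _ => 0.
Proof.
by elim: m => [|m IH] //; rewrite dnSr IH; apply/funext => x; rewrite derive1_cst.
Qed.

Lemma sum_binomialS (a b : nat -> R) m :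
  \sum_(i < m.+1) ('C(m, i))%:R * (a i * b (m - i)%N.+1 + a i.+1 * b (m - i)%N) =
  \sum_(i < m.+2) ('C(m.+1, i))%:R * (a i * b (m.+1 - i)%N).
Proof.
rewrite -(big_mkord xpredT (fun i => ('C(m.+1, i))%:R * (a i * b (m.+1 - i)%N))).
rewrite -(big_mkord xpredT (fun i =>
  ('C(m, i))%:R * (a i * b (m - i)%N.+1 + a i.+1 * b (m - i)%N))).
rewrite [RHS]big_nat_recl // bin0 mul1r subn0.
under [X in _ = _ + X]eq_bigr => i _ do rewrite binS natrD mulrDl subSS.
rewrite big_split addrA; under [LHS]eq_bigr => i _ do rewrite mulrDr.
rewrite big_split; congr (_ + _).
rewrite big_nat_recl // bin0 mul1r subn0 big_nat_recr //= bin_small //.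
rewrite mulr0n mul0r addr0; congr (_ + _).
apply: eq_big_nat => i /andP[_ hi].
by have -> : (m - i.+1).+1 = (m - i)%N by lia.
Qed.

Lemma dnM f g m : smooth f -> smooth g ->
  dn m (fun y => f y * g y) =
  fun y => \sum_(i < m.+1) ('C(m, i))%:R * (dn i f y * dn (m - i)%N g y).
Proof.
move=> hf hg; elim: m => [|m IH].
  by apply/funext => y; rewrite big_ord1 bin0 mul1r.
rewrite dnSr IH derive1_sum => [|i x]; last first.
  by apply/smooth_derivable/smoothM; [exact: smooth_cst|apply: smoothM; exact: smooth_dn].
apply/funext => y; rewrite -(sum_binomialS (fun i => dn i f y) (fun j => dn j g y)).
apply: eq_bigr => i _; rewrite /= derive1E deriveMl; last first.
  by apply/smooth_derivable/smoothM; exact: smooth_dn.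
rewrite -derive1E derive1M; try exact/smooth_derivable/smooth_dn.
by congr (_ * (_ + _)); rewrite mulrC.
Qed.

End SmoothFunctions.

Section SmoothMatrices.
Variable R : realType.

Lemma mxentE p q (A : 'M[R]_(p, q)) (i : 'I_p) (j : 'I_q) : mxent A i j = A i j.
Proof. by rewrite /mxent !valK. Qed.

Lemma smooth_mxent p q (A : R -> 'M[R]_(p, q)) a b :
  mx_smooth A -> smooth (fun x => mxent (A x) a b).
Proof.
move=> hA; rewrite /mxent; case: insub => [i|]; last exact: smooth_cst.
by case: insub => [j|]; [exact: hA | exact: smooth_cst].
Qed.

Lemma mx_smooth_cst p q (A : 'M[R]_(p, q)) : mx_smooth (fun _ => A).
Proof. by move=> i j; exact: smooth_cst. Qed.

Lemma mx_smoothD p q (A B : R -> 'M[R]_(p, q)) :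
  mx_smooth A -> mx_smooth B -> mx_smooth (fun x => A x + B x).
Proof. by move=> hA hB i j; under eq_fun do rewrite mxE; exact: smoothD. Qed.

Lemma mx_smoothN p q (A : R -> 'M[R]_(p, q)) :
  mx_smooth A -> mx_smooth (fun x => - A x).
Proof. by move=> hA i j; under eq_fun do rewrite mxE; exact: smoothN. Qed.

Lemma mx_smoothZ p q (c : R) (A : R -> 'M[R]_(p, q)) :
  mx_smooth A -> mx_smooth (fun x => c *: A x).
Proof.
by move=> hA i j; under eq_fun do rewrite mxE; apply: smoothM => //; exact: smooth_cst.
Qed.

Lemma mx_smoothM p q r (A : R -> 'M[R]_(p, q)) (B : R -> 'M[R]_(q, r)) :
  mx_smooth A -> mx_smooth B -> mx_smooth (fun x => A x *m B x).
Proof.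
move=> hA hB i j; under eq_fun do rewrite mxE.
by apply: smooth_sum => k; apply: smoothM.
Qed.

Lemma mx_smooth_sum p q (I : Type) (r : seq I) (P : pred I) (F : I -> R -> 'M[R]_(p, q)) :
  (forall i, mx_smooth (F i)) -> mx_smooth (fun x => \sum_(i <- r | P i) F i x).
Proof.
by move=> hF a b; under eq_fun do rewrite summxE; apply: smooth_sum => i; exact: hF.
Qed.

Lemma mx_smooth_dn p q k (A : R -> 'M[R]_(p, q)) : mx_smooth A -> mx_smooth (mxdn k A).
Proof. by move=> hA i j; under eq_fun do rewrite mxE; exact: smooth_dn. Qed.

Lemma smooth_det n (A : R -> 'M[R]_n) : mx_smooth A -> smooth (fun x => \det (A x)).
Proof.
move=> hA; apply: smooth_sum => s; apply: smoothM; first exact: smooth_cst.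
by apply: smooth_prod => i; exact: hA.
Qed.

Lemma mx_smooth_invmx n (A : R -> 'M[R]_n) :
  mx_smooth A -> (forall x, \det (A x) != 0) -> mx_smooth (fun x => invmx (A x)).
Proof.
move=> hA h0 i j.
have -> : (fun x => invmx (A x) i j) = fun x =>
    (\det (A x))^-1 * ((-1) ^+ (j + i) * \det (row' j (col' i (A x)))).
  by apply/funext => x; rewrite /invmx unitmxE unitfE h0 !mxE.
apply: smoothM; first by apply: smoothV => //; exact: smooth_det.
apply: smoothM; first exact: smooth_cst.
by apply: smooth_det => a b; under eq_fun do rewrite !mxE; exact: hA.
Qed.

Lemma mxdn0 p q (A : R -> 'M[R]_(p, q)) x : mxdn 0 A x = A x.
Proof. by apply/matrixP => i j; rewrite mxE. Qed.

Lemma mxdn_cst0 p q m x : mxdn m (fun _ : R => 0 : 'M[R]_(p, q)) x = 0.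
Proof. by apply/matrixP => i j; rewrite !mxE dn_cst0. Qed.

Lemma mxdn_sum_mulmx (N s m : nat) (A : nat -> R -> 'M[R]_N) (f : R -> 'cV[R]_N) x :
  (forall n, mx_smooth (A n)) -> mx_smooth f ->
  mxdn m (fun y => \sum_(n < s) A n y *m mxdn n f y) x =
  \sum_(n < s) \sum_(i < m.+1)
    ('C(m, i))%:R *: (mxdn i (A n) x *m mxdn (m + n - i) f x).
Proof.
move=> hA hf; apply/matrixP => a b; rewrite mxE.
have -> : (fun y => (\sum_(n < s) A n y *m mxdn n f y) a b) =
    fun y => \sum_(n < s) \sum_(c < N) A n y a c * dn n (fun z => f z c b) y.
  apply/funext => y; rewrite summxE; apply: eq_bigr => n _; rewrite mxE.
  by apply: eq_bigr => c _; rewrite mxE.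
rewrite dn_sum => [|n]; last first.
  by apply: smooth_sum => c; apply: smoothM; [exact: hA | exact: smooth_dn].
rewrite summxE; apply: eq_bigr => n _.
rewrite dn_sum => [|c]; last by apply: smoothM; [exact: hA | exact: smooth_dn].
rewrite summxE; under [RHS]eq_bigr => i _ do rewrite mxE [X in _ * X]mxE mulr_sumr.
rewrite exchange_big /=; apply: eq_bigr => c _.
rewrite dnM; [|exact: hA | exact: smooth_dn].
apply: eq_bigr => i _; rewrite !mxE dn_dn.
by have -> : (m - i + n = m + n - i)%N by have := ltn_ord i; lia.
Qed.

End SmoothMatrices.

Lemma sum_ord_widen (V : zmodType) n1 n2 (F : nat -> V) : (n1 <= n2)%N ->
  (forall k, (n1 <= k)%N -> (k < n2)%N -> F k = 0) ->
  \sum_(k < n1) F k = \sum_(k < n2) F k.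
Proof.
move=> h12 hF; rewrite (big_ord_widen n2 F h12) big_mkcond /=.
by apply: eq_bigr => k _; case: ltnP => // hk; rewrite hF.
Qed.

Lemma sum_ord_divmod (V : nmodType) M N (F : nat -> nat -> V) : (0 < N)%N ->
  \sum_(r < M * N) F (r %/ N)%N (r %% N)%N = \sum_(j < M) \sum_(b < N) F j b.
Proof.
move=> hN; rewrite -(big_mkord xpredT (fun r => F (r %/ N)%N (r %% N)%N)).
under [RHS]eq_bigr do rewrite -(big_mkord xpredT (F _)).
rewrite -(big_mkord xpredT (fun j => \sum_(0 <= b < N) F j b)).
elim: M => [|M IH]; first by rewrite mul0n !big_geq.
rewrite mulSnr (@big_cat_nat _ _ _ (M * N)%N) ?leq_addr // IH big_nat_recr //=.
congr (_ + _); rewrite -{1}(add0n (M * N)%N) big_addn addKn.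
apply: eq_big_nat => b /andP[_ hb].
by rewrite addnC divnMDl // modnMDl divn_small // modn_small // addn0.
Qed.

Section Modo.
Variables (R : realType) (N : nat).
Implicit Types L Q K : modo R N.

Lemma coef_oversize L k : (size L <= k)%N -> coef L k = fun _ => 0.
Proof. by move=> h; rewrite /coef nth_default. Qed.

Lemma modo_apply_widen L f x T : (size L <= T)%N ->
  modo_apply L f x = \sum_(k < T) coef L k x *m mxdn k f x.
Proof.
move=> hT; rewrite /modo_apply.
apply: (sum_ord_widen (F := fun k => coef L k x *m mxdn k f x)) => // k hk _.
by rewrite coef_oversize // mul0mx.
Qed.

Lemma modo_apply_cst0 L x : modo_apply L (fun _ => 0) x = 0.
Proof. by apply: big1 => k _; rewrite mxdn_cst0 mulmx0. Qed.

Definition mul_coef K b (q : nat -> R -> 'M[R]_N) k x :=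
  \sum_(m < b) \sum_(n < size K) \sum_(i < m.+1)
     if (m + n - i == k)%N then ('C(m, i))%:R *: (q m x *m mxdn i (coef K n) x)
     else 0.

Lemma coef_modo_mul Q K k x : (k < size Q + size K)%N ->
  coef (modo_mul Q K) k x = mul_coef K (size Q) (coef Q) k x.
Proof. by move=> h; rewrite /coef nth_mkseq. Qed.

Lemma modo_apply_mul Q K f x : modo_smooth K -> mx_smooth f ->
  modo_apply (modo_mul Q K) f x = modo_apply Q (modo_apply K f) x.
Proof.
move=> hK hf; rewrite {1}/modo_apply size_mkseq.
under eq_bigr => k _ do rewrite coef_modo_mul // /mul_coef mulmx_suml.
rewrite exchange_big; apply: eq_bigr => m _.
rewrite /modo_apply mxdn_sum_mulmx //.
under eq_bigr => k _ do rewrite mulmx_suml.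
rewrite mulmx_sumr exchange_big; apply: eq_bigr => n _.
under eq_bigr => k _ do rewrite mulmx_suml.
rewrite mulmx_sumr exchange_big; apply: eq_bigr => i _ /=.
have hlt : (m + n - i < size Q + size K)%N.
  by have := ltn_ord m; have := ltn_ord n; lia.
under eq_bigr => k _ do rewrite (fun_if (fun A => A *m mxdn k f x)) mul0mx eq_sym.
rewrite -big_mkcond /= (big_ord1_eq _ (fun k =>
  ('C(m, i))%:R *: (coef Q m x *m mxdn i (coef K n) x) *m mxdn k f x)) hlt.
by rewrite -scalemxAl -scalemxAr mulmxA.
Qed.

End Modo.

Section Wronskian.
Variables (R : realType) (M N : nat) (phi : 'I_(M * N) -> R -> 'cV[R]_N).
Hypothesis hN : (0 < N)%N.
Hypothesis hphi : forall i, mx_smooth (phi i).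
Hypothesis hdet : forall x, \det (wronsk phi x) != 0.

Lemma wronsk_unit x : wronsk phi x \in unitmx.
Proof. by rewrite unitmxE unitfE hdet. Qed.

Lemma wronsk_smooth : mx_smooth (wronsk phi).
Proof.
by move=> r i; under eq_fun do rewrite mxE; apply: smooth_mxent; apply: mx_smooth_dn.
Qed.

Lemma wronsk_top_smooth : mx_smooth (wronsk_top phi).
Proof. by move=> a i; under eq_fun do rewrite !mxE; exact/smooth_dn/hphi. Qed.

Lemma Ccoef_smooth j : mx_smooth (Ccoef phi j).
Proof.
move=> a b; under eq_fun do rewrite mxE.
apply/smooth_mxent/mx_smoothM; first exact: wronsk_top_smooth.
by apply: mx_smooth_invmx => //; exact: wronsk_smooth.
Qed.

Lemma size_Kop : size (Kop phi) = M.+1.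
Proof. by rewrite size_rcons size_mkseq. Qed.

Lemma coef_Kop k : coef (Kop phi) k =
  if (k < M)%N then fun x => - Ccoef phi k x
  else if (k == M)%N then fun _ => 1%:M else fun _ => 0.
Proof.
by rewrite /coef /Kop nth_rcons size_mkseq; case: ltnP => h //; rewrite nth_mkseq.
Qed.

Lemma Kop_smooth : modo_smooth (Kop phi).
Proof.
move=> k; rewrite coef_Kop; case: ifP => _; first exact/mx_smoothN/Ccoef_smooth.
by case: ifP => _; exact: mx_smooth_cst.
Qed.

Lemma Kop_monic : monic_of_order M (Kop phi).
Proof.
split=> [x|i x hi]; first by rewrite coef_Kop ltnn eqxx.
by rewrite coef_Kop ltnNge (ltnW hi) /= gtn_eqF.
Qed.

Lemma annihilator_order_lt_eq0 x (D : nat -> 'M[R]_N) :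
  (forall i, \sum_(j < M) D j *m mxdn j (phi i) x = 0) ->
  forall j, (j < M)%N -> D j = 0.
Proof.
move=> hD.
pose Dm : 'M[R]_(N, M * N) := \matrix_(a, r) mxent (D (r %/ N)%N) a (r %% N)%N.
have DmW : Dm *m wronsk phi x = 0.
  apply/matrixP => a i; rewrite !mxE; under eq_bigr => r _ do rewrite !mxE.
  rewrite (sum_ord_divmod M (fun j b => mxent (D j) a b * mxent (mxdn j (phi i) x) b 0)) //.
  move/matrixP: (hD i) => /(_ a 0); rewrite summxE mxE => hDi; rewrite -[RHS]hDi.
  apply: eq_bigr => j _; rewrite mxE; apply: eq_bigr => b _.
  by rewrite mxentE (mxentE _ _ (0 : 'I_1)).
have Dm0 : Dm = 0 by rewrite -(mulmxK (wronsk_unit x) Dm) DmW mul0mx.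
move=> j hj; apply/matrixP => a b.
have hr : (j * N + b < M * N)%N by have := ltn_ord b; nia.
move/matrixP: Dm0 => /(_ a (Ordinal hr)); rewrite !mxE /=.
by rewrite divnMDl // modnMDl divn_small // modn_small // addn0 mxentE.
Qed.

Lemma modo_eq_of_coef_ge (L1 L2 : modo R N) :
  (forall i x, modo_apply L1 (phi i) x = modo_apply L2 (phi i) x) ->
  (forall k x, (M <= k)%N -> coef L1 k x = coef L2 k x) -> modo_eq L1 L2.
Proof.
move=> happ hhigh k x; case: (ltnP k M) => hk; last exact: hhigh.
apply/eqP; rewrite -subr_eq0; apply/eqP.
apply: (@annihilator_order_lt_eq0 x (fun j => coef L1 j x - coef L2 j x)) => // i.
pose T := (size L1 + size L2 + M)%N.
have sumT0 : \sum_(j < T) (coef L1 j x - coef L2 j x) *m mxdn j (phi i) x = 0.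
  under eq_bigr do rewrite mulmxBl.
  by rewrite sumrB -!modo_apply_widen ?happ ?subrr // /T; lia.
rewrite -[RHS]sumT0; apply: (sum_ord_widen
    (F := fun j => (coef L1 j x - coef L2 j x) *m mxdn j (phi i) x)) => [|j hj _].
  by rewrite /T; lia.
by rewrite hhigh // subrr mul0mx.
Qed.

Lemma Ccoef_sum_mxdn x (i : 'I_(M * N)) :
  \sum_(k < M) Ccoef phi k x *m mxdn k (phi i) x = mxdn M (phi i) x.
Proof.
apply/matrixP => a b; rewrite (ord1 b) summxE; under eq_bigr => k _ do rewrite mxE.
set P := wronsk_top phi x *m invmx (wronsk phi x).
have -> : \sum_(k < M) \sum_(c < N) Ccoef phi k x a c * mxdn k (phi i) x c 0 =
    \sum_(k < M) \sum_(c < N) mxent P a (k * N + c)%N * mxent (mxdn k (phi i) x) c 0.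
  by apply: eq_bigr => k _; apply: eq_bigr => c _; rewrite mxE (mxentE _ _ (0 : 'I_1)).
rewrite -(sum_ord_divmod M
  (fun j c => mxent P a (j * N + c)%N * mxent (mxdn j (phi i) x) c 0)) //=.
have -> : mxdn M (phi i) x a 0 = (P *m wronsk phi x) a i.
  by rewrite /P (mulmxKV (wronsk_unit x)) !mxE.
rewrite mxE; apply: eq_bigr => r _.
by rewrite [wronsk phi x r i]mxE -divn_eq mxentE.
Qed.

Lemma Kop_annihilates i x : modo_apply (Kop phi) (phi i) x = 0.
Proof.
rewrite /modo_apply size_Kop big_ord_recr /= coef_Kop ltnn eqxx mul1mx.
under eq_bigr => k _ do rewrite coef_Kop ltn_ord mulNmx.
by rewrite sumrN Ccoef_sum_mxdn addNr.
Qed.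

End Wronskian.

Section RightDivision.
Variables (R : realType) (N M : nat) (K : modo R N).
Hypothesis size_K : size K = M.+1.
Hypothesis coef_K_top : forall x, coef K M x = 1%:M.
Hypothesis K_smooth : modo_smooth K.

Lemma mul_coefD b q1 q2 k x :
  mul_coef K b (fun m y => q1 m y + q2 m y) k x =
  mul_coef K b q1 k x + mul_coef K b q2 k x.
Proof.
rewrite /mul_coef -big_split; apply: eq_bigr => m _; rewrite -big_split.
apply: eq_bigr => n _; rewrite -big_split; apply: eq_bigr => i _.
by case: ifP => _ /=; rewrite ?addr0 // mulmxDl scalerDr.
Qed.

Lemma mul_coef_widen b c q k x : (c <= b)%N ->
  (forall m y, (c <= m)%N -> q m y = 0) -> mul_coef K b q k x = mul_coef K c q k x.
Proof.
move=> hcb hq; symmetry; apply: (sum_ord_widen (F := fun m =>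
  \sum_(n < size K) \sum_(i < m.+1) if (m + n - i == k)%N
    then ('C(m, i))%:R *: (q m x *m mxdn i (coef K n) x) else 0)) => // m hm _.
by apply: big1 => n _; apply: big1 => i _; rewrite hq // mul0mx scaler0; case: ifP.
Qed.

Lemma mul_coef0 b k x : mul_coef K b (fun _ _ => 0) k x = 0.
Proof.
apply: big1 => m _; apply: big1 => n _; apply: big1 => i _.
by rewrite mul0mx scaler0; case: ifP.
Qed.

Lemma mul_coef_smooth b q k : (forall m, mx_smooth (q m)) -> mx_smooth (mul_coef K b q k).
Proof.
move=> hq; rewrite /mul_coef.
apply: mx_smooth_sum => m; apply: mx_smooth_sum => n; apply: mx_smooth_sum => i.
case: (m + n - i == k)%N; last exact: mx_smooth_cst.
by apply/mx_smoothZ/mx_smoothM; [exact: hq | exact/mx_smooth_dn/K_smooth].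
Qed.

Definition monomial_coef d (a : R -> 'M[R]_N) : nat -> R -> 'M[R]_N :=
  fun m y => if (m == d)%N then a y else 0.

Lemma mul_coef_monomial_gt d a k x : (d + M < k)%N ->
  mul_coef K d.+1 (monomial_coef d a) k x = 0.
Proof.
move=> hk; rewrite /mul_coef; apply: big1 => m _; apply: big1 => n _; apply: big1 => i _.
have hn : (n < M.+1)%N by rewrite -size_K.
by rewrite ifF //; apply/negbTE/eqP; have := ltn_ord m; lia.
Qed.

Lemma mul_coef_monomial_top d a x : mul_coef K d.+1 (monomial_coef d a) (d + M) x = a x.
Proof.
rewrite /mul_coef big_ord_recr /= big1 ?add0r => [|m _]; last first.
  apply: big1 => n _; apply: big1 => i _.
  by rewrite /monomial_coef (ltn_eqF (ltn_ord m)) mul0mx scaler0; case: ifP.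
rewrite /monomial_coef eqxx.
have hM : (M < size K)%N by rewrite size_K.
rewrite (bigD1 (Ordinal hM)) //= [X in _ + X]big1 ?addr0 => [|n hn]; last first.
  apply: big1 => i _; rewrite ifF //; apply/negbTE/eqP.
  have /eqP hnM : n != M :> nat by apply: contra hn => /eqP e; apply/eqP/val_inj.
  have hnM' : (n < M.+1)%N by rewrite -size_K.
  by have := ltn_ord i; lia.
rewrite big_ord_recl /= subn0 eqxx bin0 scale1r mxdn0 coef_K_top mulmx1.
rewrite big1 ?addr0 // => i _; rewrite ifF //; apply/negbTE/eqP.
by have := ltn_ord i; rewrite /bump /=; lia.
Qed.

(* Division by the monic K, one degree at a time: the coefficient a of order
   d + M of the dividend is cancelled by subtracting (a times the d-th
   derivative) composed with K. *)
Lemma right_division_coef d (al : nat -> R -> 'M[R]_N) :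
  (forall k, mx_smooth (al k)) -> (forall k x, (d + M <= k)%N -> al k x = 0) ->
  exists q : nat -> R -> 'M[R]_N, [/\ forall m, mx_smooth (q m),
    forall m x, (d <= m)%N -> q m x = 0 &
    forall b k x, (d <= b)%N -> (M <= k)%N -> mul_coef K b q k x = al k x].
Proof.
elim: d al => [|d IH] al hal al0.
  exists (fun _ _ => 0); split=> [m|//|b k x _ hk]; first exact: mx_smooth_cst.
  by rewrite mul_coef0 al0.
pose mon := monomial_coef d (al (d + M)%N).
have mon_smooth m : mx_smooth (mon m).
  by rewrite /mon /monomial_coef; case: eqP => _; [exact: hal | exact: mx_smooth_cst].
have mon0 m y : (d.+1 <= m)%N -> mon m y = 0.
  by move=> hm; rewrite /mon /monomial_coef ifF //; apply/negbTE; rewrite neq_ltn hm orbT.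
pose al' k y := al k y - mul_coef K d.+1 mon k y.
have [k|k x hk|q [q_smooth q0 q_al']] := IH al'.
- by apply/mx_smoothD/mx_smoothN/mul_coef_smooth.
- move: hk; rewrite leq_eqVlt => /orP[/eqP <-|hk].
    by rewrite /al' mul_coef_monomial_top subrr.
  by rewrite /al' al0 ?mul_coef_monomial_gt ?subrr // addSn.
exists (fun m y => q m y + mon m y); split=> [m|m x hm|b k x hb hk].
- exact: mx_smoothD.
- by rewrite q0 ?mon0 ?addr0 // ltnW.
- rewrite mul_coefD q_al' ?(ltnW hb) // (@mul_coef_widen b d.+1 mon k x hb mon0).
  by rewrite /al' subrK.
Qed.

Lemma modo_right_division (L : modo R N) : modo_smooth L ->
  exists Q : modo R N, modo_smooth Q /\
    forall k x, (M <= k)%N -> coef L k x = coef (modo_mul Q K) k x.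
Proof.
move=> hL; pose d := (size L - M)%N.
have [|q [q_smooth q0 q_L]] := @right_division_coef d (coef L) hL.
  by move=> k x hk; rewrite coef_oversize //; lia.
have coefQ : coef (mkseq q d) = q.
  apply/funext => m; apply/funext => y; rewrite /coef.
  by case: (ltnP m d) => h; [rewrite nth_mkseq | rewrite nth_default ?size_mkseq ?q0].
exists (mkseq q d); split=> [m|k x hk]; first by rewrite coefQ.
case: (ltnP k (size (mkseq q d) + size K)) => hQK.
  by rewrite coef_modo_mul // size_mkseq coefQ q_L.
rewrite !coef_oversize ?size_mkseq //; move: hQK; rewrite size_mkseq size_K; lia.
Qed.

End RightDivision.

Theorem theorem2 (R : realType) (M N : nat) (hM : (1 <= M)%N) (hN : (1 <= N)%N)
  (phi : 'I_(M * N) -> R -> 'cV[R]_N)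
  (hphi : forall i, mx_smooth (phi i))
  (hdet : forall x, \det (wronsk phi x) != 0) :
  (* (a) K is a monic MODO of order M annihilating every phi_i, and it is
         the unique one *)
  (modo_smooth (Kop phi) /\ monic_of_order M (Kop phi) /\
   (forall i x, modo_apply (Kop phi) (phi i) x = 0) /\
   (forall K' : modo R N, modo_smooth K' -> monic_of_order M K' ->
      (forall i x, modo_apply K' (phi i) x = 0) -> modo_eq K' (Kop phi)))
  /\
  (* (b) every MODO annihilating all phi_i is right-divisible by K *)
  (forall L : modo R N, modo_smooth L ->
     (forall i x, modo_apply L (phi i) x = 0) ->
     exists Q : modo R N, modo_smooth Q /\ modo_eq L (modo_mul Q (Kop phi))).
Proof.
have Kop_ann := Kop_annihilates hN hdet.
have Kop_sm := Kop_smooth hphi hdet.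
have [Kop_top Kop_high] := Kop_monic phi.
split.
  do 3!split=> //.
  move=> K' _ [K'_top K'_high] K'_ann.
  apply: (modo_eq_of_coef_ge hN hdet) => [i x|k x]; first by rewrite K'_ann Kop_ann.
  by rewrite leq_eqVlt => /orP[/eqP <-|hk]; rewrite ?K'_top ?Kop_top ?K'_high ?Kop_high.
move=> L hL L_ann.
have [Q [hQ L_QK]] := modo_right_division (size_Kop phi) Kop_top Kop_sm hL.
exists Q; split=> //; apply: (modo_eq_of_coef_ge hN hdet) => // i x.
have Kphi0 : modo_apply (Kop phi) (phi i) = fun _ => 0.
  by apply/funext => y; exact: Kop_ann.
by rewrite L_ann modo_apply_mul // Kphi0 modo_apply_cst0.
Qed.
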